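(* Let $b>1$, $L>\pi$, and $\bar a\in\left(0,1-\frac{\pi^2}{L^2}\right)$. Then there exists a pair $(\phi,\psi)$ solving $$-\phi''=\phi(1-\phi-\bar a\psi),\quad -\psi''=\psi(1-b\phi-\psi)\ \text{ in }(0,L),\qquad \phi(0)=\phi(L)=0,\ \psi(0)=\psi(L)=1,$$ with $0<\phi(x)<1$ and $0<\psi(x)<1$ for all $x\in(0,L)$. *)

From Stdlib Require Import Reals.
From Coquelicot Require Import Coquelicot.
Open Scope R_scope.

Definition classical_C2 (L : R) (f f1 f2 : R -> R) : Prop :=
  (forall x, 0 <= x <= L -> continuous f x) /\
  (forall x, 0 < x < L ->
     is_derive f x (f1 x) /\ is_derive f1 x (f2 x) /\ continuous f2 x).

(* Monotone iteration for the competitive system.  Adding [m^2 phi] and [m^2 psi] to both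
   sides, with [m^2 >= b + 2], turns it into [- u'' + m^2 u = F(phi, psi)] where [F1] is
   nondecreasing in [phi] and nonincreasing in [psi], and [F2] the reverse.  Let [G] be the
   Dirichlet Green operator of [- d^2/dx^2 + m^2] on [(0, L)] and [h] the solution of the
   homogeneous equation equal to [1] at both ends.  Starting from [(1, 0)] and iterating
   [phi <- G F1(phi, psi)], [psi <- G F2(phi, psi) + h], the comparison principle makes
   [phi_n] decrease and [psi_n] increase inside [[0, 1]], and keeps [phi_n] above the
   subsolution [(1 - abar - pi^2 / L^2) sin (pi x / L)], positive by hypothesis.  The
   iterates are uniformly Lipschitz, hence converge uniformly, and the limit is a fixed
   point, i.e. a classical solution.  Strict bounds: [phi <= G m^2 = 1 - h < 1],
   [psi >= h > 0], and [1 - psi = G (m^2 - F2) >= G (b phi psi)] dominates a positive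
   multiple of [sin (pi x / L)]. *)

From Stdlib Require Import Reals Lra Psatz Lia.
From Coquelicot Require Import Coquelicot.
Open Scope R_scope.

Lemma exp_le x y : x <= y -> exp x <= exp y.
Proof. intros [Hlt | ->]; [left; now apply exp_increasing | lra]. Qed.

Lemma sinh_plus x y : sinh (x + y) = sinh x * cosh y + cosh x * sinh y.
Proof. unfold sinh, cosh. rewrite Ropp_plus_distr, !exp_plus. field. Qed.

Lemma sinh_le x y : x <= y -> sinh x <= sinh y.
Proof. intros [Hlt | ->]; [left; apply sinh_lt |]; lra. Qed.

Lemma sinh_nonneg x : 0 <= x -> 0 <= sinh x.
Proof. intros Hx. rewrite <- sinh_0. now apply sinh_le. Qed.

Lemma cosh_opp x : cosh (- x) = cosh x.
Proof. unfold cosh. rewrite Ropp_involutive. field. Qed.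

Lemma cosh_ge_1 x : 1 <= cosh x.
Proof.
  unfold cosh. pose proof (exp_ineq1_le x). pose proof (exp_ineq1_le (- x)). lra.
Qed.

Lemma cosh_le_exp x T : Rabs x <= T -> cosh x <= exp T.
Proof.
  intros Hx. apply Rabs_le_between in Hx. unfold cosh.
  assert (exp x <= exp T) by (apply exp_le; lra).
  assert (exp (- x) <= exp T) by (apply exp_le; lra).
  lra.
Qed.

Lemma Rabs_sinh_le_cosh x : Rabs (sinh x) <= cosh x.
Proof.
  unfold sinh, cosh. pose proof (exp_pos x). pose proof (exp_pos (- x)).
  apply Rabs_le. lra.
Qed.

(** * Classical solutions and the comparison principle *)

Lemma is_derive_continuous (f : R -> R) x l : is_derive f x l -> continuous f x.
Proof.
  intros Hf. apply (ex_derive_continuous (K := R_AbsRing) (V := R_NormedModule)). now exists l.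
Qed.

Lemma is_derive_mult_div (a b c d : R -> R) da db dc dd D x l :
  is_derive a x da -> is_derive b x db -> is_derive c x dc -> is_derive d x dd ->
  l = (da * b x + a x * db + (dc * d x + c x * dd)) / D ->
  is_derive (fun y => (a y * b y + c y * d y) / D) x l.
Proof.
  intros Ha Hb Hc Hd ->. unfold Rdiv.
  apply (is_derive_ext (fun y => (a y * b y + c y * d y) * / D)); [easy |].
  apply is_derive_Reals in Ha, Hb, Hc, Hd. apply is_derive_Reals.
  replace ((da * b x + a x * db + (dc * d x + c x * dd)) * / D)
    with ((da * b x + a x * db + (dc * d x + c x * dd)) * / D + (a x * b x + c x * d x) * 0)
    by ring.
  apply (derivable_pt_lim_mult (fun y => a y * b y + c y * d y) (fct_cte (/ D))).
  - apply (derivable_pt_lim_plus (fun y => a y * b y) (fun y => c y * d y));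
      now apply derivable_pt_lim_mult.
  - apply derivable_pt_lim_const.
Qed.

Lemma classical_C2_const L c : classical_C2 L (fun _ => c) (fun _ => 0) (fun _ => 0).
Proof.
  split; [intros; apply continuous_const |].
  intros x _. split; [| split];
    [apply is_derive_Reals, derivable_pt_lim_const .. | apply continuous_const].
Qed.

Lemma classical_C2_plus L u u1 u2 v v1 v2 :
  classical_C2 L u u1 u2 -> classical_C2 L v v1 v2 ->
  classical_C2 L (fun x => u x + v x) (fun x => u1 x + v1 x) (fun x => u2 x + v2 x).
Proof.
  intros [Hu Hu'] [Hv Hv']. split.
  - intros x Hx. now apply (continuous_plus u v); [apply Hu | apply Hv].
  - intros x Hx. destruct (Hu' x Hx) as (Hu1 & Hu2 & Hc), (Hv' x Hx) as (Hv1 & Hv2 & Hd).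
    split; [| split].
    + now apply (is_derive_plus (V := R_NormedModule)).
    + now apply (is_derive_plus (V := R_NormedModule)).
    + now apply (continuous_plus u2 v2).
Qed.

Lemma classical_C2_scal L c u u1 u2 :
  classical_C2 L u u1 u2 ->
  classical_C2 L (fun x => c * u x) (fun x => c * u1 x) (fun x => c * u2 x).
Proof.
  intros [Hu Hu']. split.
  - intros x Hx. apply (continuous_scal_r c u). now apply Hu.
  - intros x Hx. destruct (Hu' x Hx) as (Hu1 & Hu2 & Hc).
    split; [| split]; [now apply is_derive_scal .. | now apply (continuous_scal_r c u2)].
Qed.

Lemma classical_C2_minus L u u1 u2 v v1 v2 :
  classical_C2 L u u1 u2 -> classical_C2 L v v1 v2 ->
  classical_C2 L (fun x => u x - v x) (fun x => u1 x - v1 x) (fun x => u2 x - v2 x).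
Proof.
  intros [Hu Hu'] [Hv Hv']. split.
  - intros x Hx. now apply (continuous_minus u v); [apply Hu | apply Hv].
  - intros x Hx. destruct (Hu' x Hx) as (Hu1 & Hu2 & Hc), (Hv' x Hx) as (Hv1 & Hv2 & Hd).
    split; [| split].
    + now apply (is_derive_minus (V := R_NormedModule)).
    + now apply (is_derive_minus (V := R_NormedModule)).
    + now apply (continuous_minus u2 v2).
Qed.

Lemma convex_midpoint_lt (w w1 w2 : R -> R) a d : 0 < d ->
  (forall x, a - d <= x <= a + d ->
     is_derive w x (w1 x) /\ is_derive w1 x (w2 x) /\ 0 < w2 x) ->
  2 * w a < w (a - d) + w (a + d).
Proof.
  intros Hd Hw.
  assert (Dw : forall x, a - d <= x <= a + d -> derivable_pt_lim w x (w1 x))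
    by (intros x Hx; apply is_derive_Reals, Hw, Hx).
  destruct (MVT_cor2 w w1 (a - d) a) as (x1 & E1 & Hx1); [lra | intros; apply Dw; lra |].
  destruct (MVT_cor2 w w1 a (a + d)) as (x2 & E2 & Hx2); [lra | intros; apply Dw; lra |].
  destruct (MVT_cor2 w1 w2 x1 x2) as (y & E & Hy);
    [lra | intros; apply is_derive_Reals, Hw; lra |].
  assert (0 < w2 y) by (apply Hw; lra).
  assert (w1 x1 < w1 x2) by nra.
  nra.
Qed.

Lemma continuous_pos_near (f : R -> R) c : continuous f c -> 0 < f c ->
  exists d, 0 < d /\ forall y, Rabs (y - c) < d -> 0 < f y.
Proof.
  intros Hf Hc.
  assert (Hnear : locally c (fun y => 0 < f y)).
  { apply Hf. exists (mkposreal _ Hc). intros z Hz. apply Rabs_lt_between' in Hz.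
    simpl in Hz. lra. }
  destruct Hnear as [d Hd]. exists d. split; [apply cond_pos |]. intros y Hy. now apply Hd.
Qed.

Lemma max_principle L k w w1 w2 : 0 < k -> classical_C2 L w w1 w2 ->
  (forall x, 0 < x < L -> k * w x <= w2 x) -> w 0 <= 0 -> w L <= 0 ->
  forall x, 0 <= x <= L -> w x <= 0.
Proof.
  intros Hk [Hc Hd] Hw H0 HL x0 Hx0. apply Rnot_lt_le. intros Hpos.
  destruct (continuity_ab_maj w 0 L) as (c & Hmax & Hcin); [lra | |].
  { intros x Hx. now apply continuity_pt_filterlim, Hc. }
  assert (Hwc : 0 < w c) by (specialize (Hmax x0 Hx0); lra).
  assert (Hcc : 0 < c < L).
  { split; apply Rnot_ge_lt; intros Hge.
    - replace c with 0 in Hwc by lra. lra.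
    - replace c with L in Hwc by lra. lra. }
  destruct (continuous_pos_near w c (Hc c Hcin) Hwc) as (r & Hr & Hnear).
  set (d := Rmin r (Rmin c (L - c)) / 2).
  assert (Hd0 : 0 < d /\ d < r /\ d < c /\ d < L - c).
  { unfold d. pose proof (Rmin_l r (Rmin c (L - c))). pose proof (Rmin_r r (Rmin c (L - c))).
    pose proof (Rmin_l c (L - c)). pose proof (Rmin_r c (L - c)).
    assert (0 < Rmin r (Rmin c (L - c))) by (repeat apply Rmin_glb_lt; lra). lra. }
  assert (2 * w c < w (c - d) + w (c + d)).
  { apply (convex_midpoint_lt w w1 w2); [lra |]. intros x Hx.
    destruct (Hd x ltac:(lra)) as (Dw & Dw1 & _). split; [| split]; auto.
    assert (0 < w x) by (apply Hnear, Rabs_def1; lra).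
    specialize (Hw x ltac:(lra)). nra. }
  pose proof (Hmax (c - d) ltac:(lra)). pose proof (Hmax (c + d) ltac:(lra)). lra.
Qed.

Lemma comparison L k u u1 u2 v v1 v2 : 0 < k ->
  classical_C2 L u u1 u2 -> classical_C2 L v v1 v2 ->
  (forall x, 0 < x < L -> - u2 x + k * u x <= - v2 x + k * v x) ->
  u 0 <= v 0 -> u L <= v L ->
  forall x, 0 <= x <= L -> u x <= v x.
Proof.
  intros Hk Hu Hv Hop H0 HL x Hx.
  enough (u x - v x <= 0) by lra.
  apply (max_principle L k _ _ _ Hk (classical_C2_minus _ _ _ _ _ _ _ Hu Hv)); auto; try lra.
  intros y Hy. specialize (Hop y Hy). lra.
Qed.

(** * Lipschitz functions and uniform convergence *)

Definition lipschitz_on (L K : R) (f : R -> R) :=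
  forall x y, 0 <= x <= L -> 0 <= y <= L -> Rabs (f x - f y) <= K * Rabs (x - y).

Lemma lipschitz_on_of_derive L K (f df : R -> R) :
  (forall t, 0 <= t <= L -> is_derive f t (df t)) ->
  (forall t, 0 <= t <= L -> Rabs (df t) <= K) -> lipschitz_on L K f.
Proof.
  intros Hd Hb.
  assert (Hlt : forall x y, 0 <= x <= L -> 0 <= y <= L -> x < y ->
                  Rabs (f x - f y) <= K * Rabs (x - y)).
  { intros x y Hx Hy Hxy.
    destruct (MVT_cor2 f df x y Hxy) as (c & E & Hc); [intros; apply is_derive_Reals, Hd; lra |].
    rewrite Rabs_minus_sym, E, Rabs_mult, (Rabs_minus_sym x y).
    apply Rmult_le_compat_r; [apply Rabs_pos | apply Hb; lra]. }
  intros x y Hx Hy. destruct (Rtotal_order x y) as [H | [-> | H]].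
  - now apply Hlt.
  - rewrite !Rminus_diag, Rabs_R0, Rmult_0_r. lra.
  - rewrite Rabs_minus_sym, (Rabs_minus_sym x y). now apply Hlt.
Qed.

Lemma is_lim_seq_between (u : nat -> R) (l a c : R) : (forall n, a <= u n <= c) ->
  is_lim_seq u l -> a <= l <= c.
Proof.
  intros Hu Hl. split.
  - apply (is_lim_seq_le (fun _ => a) u a l); auto; [apply Hu | apply is_lim_seq_const].
  - apply (is_lim_seq_le u (fun _ => c) l c); auto; [apply Hu | apply is_lim_seq_const].
Qed.

Lemma is_lim_seq_eq (u : nat -> R) (l l' : R) : is_lim_seq u l -> is_lim_seq u l' -> l = l'.
Proof. intros H H'. apply is_lim_seq_unique in H, H'. rewrite H in H'. now injection H'. Qed.

Lemma lipschitz_on_lim L K (u : nat -> R -> R) (l : R -> R) :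
  (forall x, 0 <= x <= L -> is_lim_seq (fun n => u n x) (l x)) ->
  (forall n, lipschitz_on L K (u n)) -> lipschitz_on L K l.
Proof.
  intros Hl Hu x y Hx Hy. apply Rabs_le_between.
  apply (is_lim_seq_between (fun n => u n x - u n y)).
  - intros n. apply Rabs_le_between, Hu; auto.
  - apply is_lim_seq_minus'; auto.
Qed.

Lemma continuous_of_lipschitz (f : R -> R) K :
  (forall x y, Rabs (f x - f y) <= K * Rabs (x - y)) -> forall x, continuous f x.
Proof.
  intros Hf x P [e He].
  pose proof (Rabs_pos K).
  assert (Hd : 0 < e / (Rabs K + 1)) by (apply Rdiv_lt_0_compat; [apply cond_pos | lra]).
  exists (mkposreal _ Hd). intros y Hy. apply He.
  change (Rabs (f y - f x) < e). change (Rabs (y - x) < e / (Rabs K + 1)) in Hy.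
  pose proof (Rabs_pos (y - x)). pose proof (Hf y x).
  assert (K * Rabs (y - x) <= Rabs K * Rabs (y - x))
    by (apply Rmult_le_compat_r; [lra | apply Rle_abs]).
  assert ((Rabs K + 1) * Rabs (y - x) < e).
  { apply (Rmult_lt_compat_l (Rabs K + 1)) in Hy; [| lra].
    now replace ((Rabs K + 1) * (e / (Rabs K + 1))) with (pos e) in Hy by (field; lra). }
  nra.
Qed.

(* The operators below only read their argument on [[0, L]], through [clamp L]; this lets
   a function that is merely continuous on [[0, L]] be integrated and differentiated
   against on all of [R]. *)
Definition clamp (L x : R) := Rmin L (Rmax 0 x).

Lemma clamp_id L x : 0 <= x <= L -> clamp L x = x.
Proof. intros. unfold clamp, Rmin, Rmax. repeat destruct Rle_dec; lra. Qed.

Lemma clamp_range L x : 0 <= L -> 0 <= clamp L x <= L.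
Proof. intros. unfold clamp, Rmin, Rmax. repeat destruct Rle_dec; lra. Qed.

Lemma clamp_lipschitz L x y : Rabs (clamp L x - clamp L y) <= Rabs (x - y).
Proof.
  unfold clamp, Rmin, Rmax.
  repeat destruct Rle_dec; unfold Rabs; repeat destruct Rcase_abs; lra.
Qed.

Definition clamped_continuous (L : R) (g : R -> R) :=
  forall y, continuous (fun z => g (clamp L z)) y.

Lemma lipschitz_on_clamped_continuous L K f : 0 <= L -> 0 <= K ->
  lipschitz_on L K f -> clamped_continuous L f.
Proof.
  intros HL HK Hf y. apply (continuous_of_lipschitz (fun z => f (clamp L z)) K). intros x z.
  eapply Rle_trans; [apply Hf; apply clamp_range, HL |].
  apply Rmult_le_compat_l; [exact HK | apply clamp_lipschitz].
Qed.

Definition unif_cvg_on (L : R) (u : nat -> R -> R) (l : R -> R) :=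
  forall e, 0 < e -> exists N, forall n, (N <= n)%nat ->
    forall x, 0 <= x <= L -> Rabs (u n x - l x) <= e.

Lemma eventually_forall_le (P : nat -> nat -> Prop) J :
  (forall j, (j <= J)%nat -> exists N, forall n, (N <= n)%nat -> P j n) ->
  exists N, forall n, (N <= n)%nat -> forall j, (j <= J)%nat -> P j n.
Proof.
  induction J as [| J IH]; intros HP.
  - destruct (HP 0%nat (le_n 0)) as [N HN]. exists N. intros n Hn j Hj.
    replace j with 0%nat by lia. auto.
  - destruct IH as [N1 HN1]; [intros j Hj; apply HP; lia |].
    destruct (HP (S J) (le_n _)) as [N2 HN2]. exists (Nat.max N1 N2). intros n Hn j Hj.
    destruct (Nat.eq_dec j (S J)) as [-> | Hne]; [apply HN2 | apply HN1]; lia.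
Qed.

Lemma grid_range L J j : 0 < L -> (0 < J)%nat -> (j <= J)%nat ->
  0 <= L * INR j / INR J <= L.
Proof.
  intros HL HJ HjJ. apply lt_0_INR in HJ. apply le_INR in HjJ. pose proof (pos_INR j). split.
  - apply Rmult_le_pos; [nra | left; now apply Rinv_0_lt_compat].
  - apply (Rmult_le_reg_r (INR J)); [lra |]. unfold Rdiv. rewrite Rmult_assoc, Rinv_l; nra.
Qed.

Lemma grid_near L J x : 0 < L -> (0 < J)%nat -> 0 <= x <= L ->
  exists j, (j <= J)%nat /\ Rabs (x - L * INR j / INR J) <= L / INR J.
Proof.
  intros HL HJ Hx. apply lt_0_INR in HJ.
  destruct (nfloor_ex (x * INR J / L)) as (j & Hj1 & Hj2).
  { apply Rmult_le_pos; [nra | left; now apply Rinv_0_lt_compat]. }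
  assert (Hxj : x * INR J / L <= INR J).
  { apply (Rmult_le_reg_r L); [lra |]. unfold Rdiv. rewrite Rmult_assoc, Rinv_l; nra. }
  exists j. split; [apply INR_le; lra |].
  replace (x - L * INR j / INR J) with (L / INR J * (x * INR J / L - INR j)) by (field; lra).
  assert (0 < L / INR J) by (apply Rdiv_lt_0_compat; lra).
  rewrite Rabs_mult, (Rabs_pos_eq (L / INR J)), Rabs_pos_eq by lra. nra.
Qed.

(* Check convergence on a finite grid of mesh [L / J] with [K L / J <= e / 3]. *)
Lemma unif_cvg_on_of_lipschitz L K (u : nat -> R -> R) (l : R -> R) : 0 < L -> 0 <= K ->
  (forall x, 0 <= x <= L -> is_lim_seq (fun n => u n x) (l x)) ->
  (forall n, lipschitz_on L K (u n)) -> lipschitz_on L K l -> unif_cvg_on L u l.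
Proof.
  intros HL HK Hlim Hu Hl e He.
  destruct (archimed_cor1 (e / (3 * (K * L + 1)))) as (J & HJe & HJ).
  { apply Rdiv_lt_0_compat; nra. }
  assert (HJpos : 0 < / INR J) by now apply Rinv_0_lt_compat, lt_0_INR.
  assert (Hmesh : K * (L / INR J) <= e / 3).
  { apply (Rmult_lt_compat_r (K * L + 1)) in HJe; [| nra].
    replace (e / (3 * (K * L + 1)) * (K * L + 1)) with (e / 3) in HJe by (field; nra).
    unfold Rdiv at 1. nra. }
  set (g j := L * INR j / INR J).
  destruct (eventually_forall_le (fun j n => Rabs (u n (g j) - l (g j)) < e / 3) J)
    as [N HN].
  { intros j Hj. pose proof (Hlim (g j) (grid_range L J j HL HJ Hj)) as Hc.
    apply is_lim_seq_spec in Hc. destruct (Hc (mkposreal (e / 3) ltac:(lra))) as [N HN].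
    exists N. exact HN. }
  exists N. intros n Hn x Hx.
  destruct (grid_near L J x HL HJ Hx) as (j & Hj & Hxj). fold (g j) in Hxj.
  pose proof (grid_range L J j HL HJ Hj) as Hgj. fold (g j) in Hgj.
  pose proof (HN n Hn j Hj) as Hgrid.
  pose proof (Hu n x (g j) Hx Hgj) as Hun. pose proof (Hl (g j) x Hgj Hx) as Hlj.
  rewrite (Rabs_minus_sym (g j) x) in Hlj.
  assert (K * Rabs (x - g j) <= e / 3)
    by (eapply Rle_trans; [apply Rmult_le_compat_l; eauto | exact Hmesh]).
  replace (u n x - l x) with ((u n x - u n (g j)) + (u n (g j) - l (g j)) + (l (g j) - l x))
    by ring.
  pose proof (Rabs_triang (u n x - u n (g j) + (u n (g j) - l (g j))) (l (g j) - l x)).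
  pose proof (Rabs_triang (u n x - u n (g j)) (u n (g j) - l (g j))).
  lra.
Qed.

(** * Green's operator *)

Section Green.

Variables m L : R.
Hypothesis Hm : 0 < m.
Hypothesis HL : 0 < L.

(* The solution operator of [- u'' + m^2 u = g], [u(0) = u(L) = 0], whose kernel is
   [sinh (m min(x,y)) sinh (m (L - max(x,y))) / (m sinh (m L))]. *)
Definition green_left (g : R -> R) x := RInt (fun y => sinh (m * y) * g (clamp L y)) 0 x.
Definition green_right (g : R -> R) x :=
  RInt (fun y => sinh (m * (L - y)) * g (clamp L y)) x L.
Definition green g x :=
  (sinh (m * (L - x)) * green_left g x + sinh (m * x) * green_right g x) / (m * sinh (m * L)).
Definition green1 g x :=
  (- m * cosh (m * (L - x)) * green_left g x + m * cosh (m * x) * green_right g x)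
  / (m * sinh (m * L)).

Lemma sinh_mL_pos : 0 < sinh (m * L).
Proof. rewrite <- sinh_0. apply sinh_lt. nra. Qed.

Lemma is_derive_sinh_l x : is_derive (fun y => sinh (m * y)) x (m * cosh (m * x)).
Proof. unfold sinh, cosh. auto_derive; [easy | unfold Rminus; field]. Qed.
Lemma is_derive_sinh_r x :
  is_derive (fun y => sinh (m * (L - y))) x (- m * cosh (m * (L - x))).
Proof. unfold sinh, cosh. auto_derive; [easy | unfold Rminus; field]. Qed.
Lemma is_derive_cosh_l x : is_derive (fun y => m * cosh (m * y)) x (m ^ 2 * sinh (m * x)).
Proof. unfold sinh, cosh. auto_derive; [easy | unfold Rminus; field]. Qed.
Lemma is_derive_cosh_r x :
  is_derive (fun y => - m * cosh (m * (L - y))) x (m ^ 2 * sinh (m * (L - x))).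
Proof. unfold sinh, cosh. auto_derive; [easy | unfold Rminus; field]. Qed.

Section Source.

Variable g : R -> R.
Hypothesis Hg : clamped_continuous L g.

Lemma continuous_kernel_l y : continuous (fun z => sinh (m * z) * g (clamp L z)) y.
Proof.
  apply (continuous_mult (fun z => sinh (m * z))); [| apply Hg].
  eapply is_derive_continuous, is_derive_sinh_l.
Qed.

Lemma continuous_kernel_r y : continuous (fun z => sinh (m * (L - z)) * g (clamp L z)) y.
Proof.
  apply (continuous_mult (fun z => sinh (m * (L - z)))); [| apply Hg].
  eapply is_derive_continuous, is_derive_sinh_r.
Qed.

Lemma is_derive_green_left x : is_derive (green_left g) x (sinh (m * x) * g (clamp L x)).
Proof.
  apply (is_derive_RInt (V := R_NormedModule) (fun y => sinh (m * y) * g (clamp L y))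
           (green_left g) 0 x); [| apply continuous_kernel_l].
  apply filter_forall. intros c. apply (RInt_correct (V := R_CompleteNormedModule)).
  apply (ex_RInt_continuous (V := R_CompleteNormedModule)). intros; apply continuous_kernel_l.
Qed.

Lemma is_derive_green_right x :
  is_derive (green_right g) x (- (sinh (m * (L - x)) * g (clamp L x))).
Proof.
  apply (is_derive_RInt' (V := R_NormedModule) (fun y => sinh (m * (L - y)) * g (clamp L y))
           (green_right g) x L); [| apply continuous_kernel_r].
  apply filter_forall. intros c. apply (RInt_correct (V := R_CompleteNormedModule)).
  apply (ex_RInt_continuous (V := R_CompleteNormedModule)). intros; apply continuous_kernel_r.
Qed.

Lemma is_derive_green x : is_derive (green g) x (green1 g x).
Proof.
  eapply is_derive_mult_div;
    [apply is_derive_sinh_r | apply is_derive_green_left | apply is_derive_sinh_l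
    | apply is_derive_green_right |].
  pose proof sinh_mL_pos. unfold green1. field. split; lra.
Qed.

Lemma is_derive_green1 x : is_derive (green1 g) x (m ^ 2 * green g x - g (clamp L x)).
Proof.
  eapply is_derive_mult_div;
    [apply is_derive_cosh_r | apply is_derive_green_left | apply is_derive_cosh_l
    | apply is_derive_green_right |].
  (* the Wronskian of the two kernels is [- m sinh (m L)] *)
  assert (W : sinh (m * L) = sinh (m * x) * cosh (m * (L - x)) + cosh (m * x) * sinh (m * (L - x)))
    by (rewrite <- sinh_plus; f_equal; ring).
  pose proof sinh_mL_pos.
  unfold green. rewrite W. field. rewrite <- W. split; lra.
Qed.

Lemma green_C2 : classical_C2 L (green g) (green1 g) (fun x => m ^ 2 * green g x - g (clamp L x)).
Proof.
  split.
  - intros x _. eapply is_derive_continuous, is_derive_green.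
  - intros x _. split; [| split]; [apply is_derive_green | apply is_derive_green1 |].
    apply (continuous_minus (fun y => m ^ 2 * green g y)); [| apply Hg].
    apply (continuous_scal_r (m ^ 2) (green g)). eapply is_derive_continuous, is_derive_green.
Qed.

End Source.

Lemma green_0 g : green g 0 = 0.
Proof.
  unfold green, green_left. rewrite RInt_point, (Rmult_0_r m), sinh_0. unfold zero; simpl.
  pose proof sinh_mL_pos. field. split; lra.
Qed.

Lemma green_L g : green g L = 0.
Proof.
  unfold green, green_right. rewrite RInt_point, Rminus_diag, (Rmult_0_r m), sinh_0.
  unfold zero; simpl. pose proof sinh_mL_pos. field. split; lra.
Qed.

Lemma green_ge_subsolution g u u1 u2 : clamped_continuous L g -> classical_C2 L u u1 u2 ->
  (forall x, 0 < x < L -> - u2 x + m ^ 2 * u x <= g x) -> u 0 <= 0 -> u L <= 0 ->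
  forall x, 0 <= x <= L -> u x <= green g x.
Proof.
  intros Hg Hu Hop H0 HL0.
  apply (comparison L (m ^ 2) _ _ _ _ _ _ ltac:(nra) Hu (green_C2 g Hg));
    [| now rewrite green_0 | now rewrite green_L].
  intros x Hx. rewrite clamp_id by lra. specialize (Hop x Hx). lra.
Qed.

Lemma green_le_supersolution g v v1 v2 : clamped_continuous L g -> classical_C2 L v v1 v2 ->
  (forall x, 0 < x < L -> g x <= - v2 x + m ^ 2 * v x) -> 0 <= v 0 -> 0 <= v L ->
  forall x, 0 <= x <= L -> green g x <= v x.
Proof.
  intros Hg Hv Hop H0 HL0.
  apply (comparison L (m ^ 2) _ _ _ _ _ _ ltac:(nra) (green_C2 g Hg) Hv);
    [| now rewrite green_0 | now rewrite green_L].
  intros x Hx. rewrite clamp_id by lra. specialize (Hop x Hx). lra.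
Qed.

Lemma green_le g1 g2 : clamped_continuous L g1 -> clamped_continuous L g2 ->
  (forall y, 0 <= y <= L -> g1 y <= g2 y) ->
  forall x, 0 <= x <= L -> green g1 x <= green g2 x.
Proof.
  intros Hg1 Hg2 Hle. apply (green_ge_subsolution g2 _ _ _ Hg2 (green_C2 g1 Hg1));
    [| now rewrite green_0 | now rewrite green_L].
  intros x Hx. rewrite clamp_id by lra. specialize (Hle x ltac:(lra)). lra.
Qed.

Lemma green_ge0 g : clamped_continuous L g -> (forall y, 0 <= y <= L -> 0 <= g y) ->
  forall x, 0 <= x <= L -> 0 <= green g x.
Proof.
  intros Hg Hpos. apply (green_ge_subsolution g _ _ _ Hg (classical_C2_const L 0)); try lra.
  intros x Hx. specialize (Hpos x ltac:(lra)). lra.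
Qed.

Lemma Rabs_green_sub_le g1 g2 A : clamped_continuous L g1 -> clamped_continuous L g2 ->
  (forall y, 0 <= y <= L -> Rabs (g1 y - g2 y) <= A) ->
  forall x, 0 <= x <= L -> Rabs (green g1 x - green g2 x) <= A / m ^ 2.
Proof.
  intros Hg1 Hg2 HA x Hx.
  assert (HA0 : 0 <= A) by (eapply Rle_trans; [apply Rabs_pos | apply (HA 0); lra]).
  assert (Hm2 : 0 < m ^ 2) by nra.
  assert (Hshift : forall h1 h2, clamped_continuous L h1 -> clamped_continuous L h2 ->
            (forall y, 0 <= y <= L -> h1 y <= h2 y + A) -> green h1 x <= green h2 x + A / m ^ 2).
  { intros h1 h2 Hh1 Hh2 Hle.
    apply (green_le_supersolution h1 _ _ _ Hh1
             (classical_C2_plus _ _ _ _ _ _ _ (green_C2 h2 Hh2)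
                (classical_C2_const L (A / m ^ 2))));
      auto; rewrite ?green_0, ?green_L, ?Rplus_0_l; try (apply Rdiv_le_0_compat; lra).
    intros y Hy. rewrite clamp_id by lra. specialize (Hle y ltac:(lra)).
    replace (m ^ 2 * (green h2 y + A / m ^ 2)) with (m ^ 2 * green h2 y + A) by (field; lra).
    lra. }
  apply Rabs_le. split.
  - enough (green g2 x <= green g1 x + A / m ^ 2) by lra.
    apply Hshift; auto. intros y Hy. specialize (HA y Hy). apply Rabs_le_between in HA. lra.
  - enough (green g1 x <= green g2 x + A / m ^ 2) by lra.
    apply Hshift; auto. intros y Hy. specialize (HA y Hy). apply Rabs_le_between in HA. lra.
Qed.

Lemma Rabs_green1_le g A : clamped_continuous L g ->
  (forall y, 0 <= y <= L -> Rabs (g y) <= A) ->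
  forall x, 0 <= x <= L -> Rabs (green1 g x) <= 2 * L * exp (m * L) * A.
Proof.
  intros Hg HA x Hx.
  assert (HA0 : 0 <= A) by (eapply Rle_trans; [apply Rabs_pos | apply (HA 0); lra]).
  pose proof sinh_mL_pos as HS. set (S := sinh (m * L)) in *. set (E := exp (m * L)).
  assert (Hsinh : forall y, 0 <= y <= L -> 0 <= sinh (m * y) <= S /\ 0 <= sinh (m * (L - y)) <= S)
    by (intros y Hy; repeat split; first [apply sinh_nonneg | apply sinh_le]; nra).
  assert (Hcosh : forall y, 0 <= y <= L -> 0 <= cosh (m * y) <= E /\ 0 <= cosh (m * (L - y)) <= E).
  { intros y Hy. pose proof (cosh_ge_1 (m * y)). pose proof (cosh_ge_1 (m * (L - y))).
    repeat split; try lra; apply cosh_le_exp; rewrite Rabs_pos_eq; nra. }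
  assert (Hl : Rabs (green_left g x) <= L * (S * A)).
  { eapply Rle_trans.
    - apply (abs_RInt_le_const _ 0 x (S * A)); [lra | |].
      + apply (ex_RInt_continuous (V := R_CompleteNormedModule)).
        intros; now apply continuous_kernel_l.
      + intros t Ht. rewrite Rabs_mult, clamp_id, Rabs_pos_eq by (try apply Hsinh; lra).
        apply Rmult_le_compat; [| apply Rabs_pos | | apply HA; lra]; apply Hsinh; lra.
    - apply Rmult_le_compat_r; [nra | lra]. }
  assert (Hr : Rabs (green_right g x) <= L * (S * A)).
  { eapply Rle_trans.
    - apply (abs_RInt_le_const _ x L (S * A)); [lra | |].
      + apply (ex_RInt_continuous (V := R_CompleteNormedModule)).
        intros; now apply continuous_kernel_r.
      + intros t Ht. rewrite Rabs_mult, clamp_id, Rabs_pos_eq by (try apply Hsinh; lra).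
        apply Rmult_le_compat; [| apply Rabs_pos | | apply HA; lra]; apply Hsinh; lra.
    - apply Rmult_le_compat_r; [nra | lra]. }
  unfold green1. fold S. unfold Rdiv. rewrite Rabs_mult, (Rabs_pos_eq (/ (m * S)))
    by (left; apply Rinv_0_lt_compat; nra).
  apply (Rmult_le_reg_r (m * S)); [nra |]. rewrite Rmult_assoc, Rinv_l, Rmult_1_r by nra.
  eapply Rle_trans; [apply Rabs_triang |]. rewrite !Rabs_mult, Rabs_Ropp, !(Rabs_pos_eq m) by lra.
  rewrite (Rabs_pos_eq (cosh (m * (L - x)))), (Rabs_pos_eq (cosh (m * x))) by (apply Hcosh; lra).
  destruct (Hcosh x Hx) as [[Hc0 Hc1] [Hc2 Hc3]].
  pose proof (Rabs_pos (green_left g x)). pose proof (Rabs_pos (green_right g x)).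
  apply Rle_trans with (m * E * (L * (S * A)) + m * E * (L * (S * A))).
  - apply Rplus_le_compat; apply Rmult_le_compat; try apply Rmult_le_compat_l; nra.
  - nra.
Qed.

Lemma is_lim_seq_green (h : nat -> R -> R) h0 :
  (forall n, clamped_continuous L (h n)) -> clamped_continuous L h0 -> unif_cvg_on L h h0 ->
  forall x, 0 <= x <= L -> is_lim_seq (fun n => green (h n) x) (green h0 x).
Proof.
  intros Hh Hh0 Hcvg x Hx. apply is_lim_seq_spec. intros e.
  assert (Hm2 : 0 < m ^ 2) by nra.
  destruct (Hcvg (e * m ^ 2 / 2)) as [N HN].
  { pose proof (cond_pos e). apply Rdiv_lt_0_compat; nra. }
  exists N. intros n Hn.
  eapply Rle_lt_trans; [apply (Rabs_green_sub_le _ _ (e * m ^ 2 / 2)); auto |].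
  pose proof (cond_pos e). apply (Rmult_lt_reg_r (m ^ 2)); [lra |].
  replace (e * m ^ 2 / 2 / m ^ 2 * m ^ 2) with (e * m ^ 2 / 2) by (field; lra). nra.
Qed.

Definition homog_one x := cosh (m * (x - L / 2)) / cosh (m * L / 2).
Definition homog_one1 x := m * sinh (m * (x - L / 2)) / cosh (m * L / 2).

Lemma is_derive_homog_one x : is_derive homog_one x (homog_one1 x).
Proof.
  unfold homog_one, homog_one1. pose proof (cosh_ge_1 (m * L / 2)).
  set (c := cosh (m * L / 2)) in *. unfold sinh, cosh.
  auto_derive; [easy | unfold Rminus; field; lra].
Qed.

Lemma is_derive_homog_one1 x : is_derive homog_one1 x (m ^ 2 * homog_one x).
Proof.
  unfold homog_one, homog_one1. pose proof (cosh_ge_1 (m * L / 2)).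
  set (c := cosh (m * L / 2)) in *. unfold sinh, cosh.
  auto_derive; [easy | unfold Rminus; field; lra].
Qed.

Lemma homog_one_C2 : classical_C2 L homog_one homog_one1 (fun x => m ^ 2 * homog_one x).
Proof.
  split.
  - intros x _. eapply is_derive_continuous, is_derive_homog_one.
  - intros x _. split; [| split]; [apply is_derive_homog_one | apply is_derive_homog_one1 |].
    apply (continuous_scal_r (m ^ 2) homog_one). eapply is_derive_continuous, is_derive_homog_one.
Qed.

Lemma homog_one_0 : homog_one 0 = 1.
Proof.
  unfold homog_one. replace (m * (0 - L / 2)) with (- (m * L / 2)) by field.
  rewrite cosh_opp. pose proof (cosh_ge_1 (m * L / 2)). field. lra.
Qed.

Lemma homog_one_L : homog_one L = 1.
Proof.
  unfold homog_one. replace (m * (L - L / 2)) with (m * L / 2) by field.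
  pose proof (cosh_ge_1 (m * L / 2)). field. lra.
Qed.

Lemma homog_one_ge x : / cosh (m * L / 2) <= homog_one x.
Proof.
  unfold homog_one, Rdiv. pose proof (cosh_ge_1 (m * (x - L / 2))).
  pose proof (cosh_ge_1 (m * L / 2)).
  assert (0 < / cosh (m * L / 2)) by (apply Rinv_0_lt_compat; lra). nra.
Qed.

Lemma homog_one_pos x : 0 < homog_one x.
Proof.
  eapply Rlt_le_trans; [| apply homog_one_ge].
  apply Rinv_0_lt_compat. pose proof (cosh_ge_1 (m * L / 2)). lra.
Qed.

Lemma Rabs_homog_one1_le x : 0 <= x <= L -> Rabs (homog_one1 x) <= m * exp (m * L).
Proof.
  intros Hx. unfold homog_one1, Rdiv.
  pose proof (cosh_ge_1 (m * L / 2)).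
  assert (0 < / cosh (m * L / 2) <= 1).
  { split; [apply Rinv_0_lt_compat; lra |]. rewrite <- Rinv_1. apply Rinv_le_contravar; lra. }
  assert (Rabs (sinh (m * (x - L / 2))) <= exp (m * L)).
  { eapply Rle_trans; [apply Rabs_sinh_le_cosh | apply cosh_le_exp].
    rewrite Rabs_mult, Rabs_pos_eq by lra. apply Rmult_le_compat_l; [lra |].
    apply Rabs_le. lra. }
  rewrite !Rabs_mult, Rabs_pos_eq, (Rabs_pos_eq (/ _)) by lra. rewrite Rmult_assoc.
  apply Rmult_le_compat_l; [lra |].
  pose proof (Rabs_pos (sinh (m * (x - L / 2)))). nra.
Qed.

Lemma green_const x : 0 <= x <= L -> green (fun _ => m ^ 2) x = 1 - homog_one x.
Proof.
  assert (Hc : clamped_continuous L (fun _ => m ^ 2)) by (intros y; apply continuous_const).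
  pose proof (classical_C2_minus _ _ _ _ _ _ _ (classical_C2_const L 1) homog_one_C2) as H1.
  intros Hx. apply Rle_antisym.
  - apply (green_le_supersolution _ _ _ _ Hc H1);
      [intros; lra | rewrite homog_one_0 | rewrite homog_one_L | ]; lra.
  - apply (green_ge_subsolution _ _ _ _ Hc H1);
      [intros; lra | rewrite homog_one_0 | rewrite homog_one_L | ]; lra.
Qed.

End Green.

Definition box_lipschitz (F : R -> R -> R) (C : R) :=
  forall p q p' q', 0 <= p <= 1 -> 0 <= q <= 1 -> 0 <= p' <= 1 -> 0 <= q' <= 1 ->
    Rabs (F p q - F p' q') <= C * (Rabs (p - p') + Rabs (q - q')).

Section Reaction1.

Variables abar M : R.
Hypothesis Habar : 0 <= abar <= 1.
Hypothesis HM : 2 <= M.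

Definition F1 p q := p * (1 - p - abar * q) + M * p.

Lemma F1_range p q : 0 <= p <= 1 -> 0 <= q <= 1 -> 0 <= F1 p q <= M.
Proof.
  intros. unfold F1. assert (0 <= abar * q <= 1) by (split; nra).
  split; [nra |].
  assert (p * (abar * q) >= 0) by nra. nra.
Qed.

Lemma F1_le p q p' q' : 0 <= p' <= p -> p <= 1 -> 0 <= q <= q' -> q' <= 1 ->
  F1 p' q' <= F1 p q.
Proof.
  intros. unfold F1.
  assert (0 <= p' * abar * (q' - q)) by (repeat apply Rmult_le_pos; lra).
  assert (0 <= (p - p') * (1 + M - abar * q - p - p')) by (apply Rmult_le_pos; nra).
  nra.
Qed.

Lemma F1_lipschitz : box_lipschitz F1 (M + 1).
Proof.
  intros p q p' q' Hp Hq Hp' Hq'. unfold F1.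
  replace (p * (1 - p - abar * q) + M * p - (p' * (1 - p' - abar * q') + M * p'))
    with ((p - p') * (1 + M - p - p' - abar * q) + (- abar * p') * (q - q')) by ring.
  eapply Rle_trans; [apply Rabs_triang |].
  rewrite (Rabs_mult (p - p')), (Rabs_mult (- abar * p')).
  assert (Rabs (1 + M - p - p' - abar * q) <= M + 1) by (apply Rabs_le; nra).
  assert (Rabs (- abar * p') <= M + 1) by (apply Rabs_le; nra).
  pose proof (Rabs_pos (p - p')). pose proof (Rabs_pos (q - q')).
  apply Rle_trans with (Rabs (p - p') * (M + 1) + (M + 1) * Rabs (q - q'));
    [apply Rplus_le_compat; [apply Rmult_le_compat_l | apply Rmult_le_compat_r] | ]; lra.
Qed.

Lemma F1_ge k s p q : 0 <= k -> 0 <= s <= 1 - abar - k -> s <= p <= 1 -> 0 <= q <= 1 ->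
  (k + M) * s <= F1 p q.
Proof.
  intros. unfold F1.
  assert (0 <= p * abar * (1 - q)) by (repeat apply Rmult_le_pos; lra).
  assert (0 <= (p - s) * (1 + M - abar - p - s)) by (apply Rmult_le_pos; lra).
  assert (0 <= s * (1 - abar - k - s)) by (apply Rmult_le_pos; lra).
  nra.
Qed.

End Reaction1.

Section Reaction2.

Variables b M : R.
Hypothesis Hb : 0 <= b.
Hypothesis HM : b + 1 <= M.

Definition F2 p q := q * (1 - b * p - q) + M * q.

Lemma F2_range p q : 0 <= p <= 1 -> 0 <= q <= 1 -> 0 <= F2 p q <= M.
Proof.
  intros. unfold F2. assert (0 <= b * p <= b) by (split; nra).
  split; [nra |].
  assert (q * (b * p) >= 0) by nra. nra.
Qed.

Lemma F2_le p q p' q' : 0 <= p' <= p -> p <= 1 -> 0 <= q <= q' -> q' <= 1 ->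
  F2 p q <= F2 p' q'.
Proof.
  intros. unfold F2.
  assert (0 <= q * b * (p - p')) by (repeat apply Rmult_le_pos; lra).
  assert (0 <= (q' - q) * (1 + M - b * p' - q - q')) by (apply Rmult_le_pos; nra).
  nra.
Qed.

Lemma F2_lipschitz : box_lipschitz F2 (M + 1).
Proof.
  intros p q p' q' Hp Hq Hp' Hq'. unfold F2.
  replace (q * (1 - b * p - q) + M * q - (q' * (1 - b * p' - q') + M * q'))
    with ((q - q') * (1 + M - q - q' - b * p) + (- b * q') * (p - p')) by ring.
  eapply Rle_trans; [apply Rabs_triang |].
  rewrite (Rabs_mult (q - q')), (Rabs_mult (- b * q')).
  assert (Rabs (1 + M - q - q' - b * p) <= M + 1) by (apply Rabs_le; nra).
  assert (Rabs (- b * q') <= M + 1) by (apply Rabs_le; nra).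
  pose proof (Rabs_pos (p - p')). pose proof (Rabs_pos (q - q')).
  apply Rle_trans with (Rabs (q - q') * (M + 1) + (M + 1) * Rabs (p - p'));
    [apply Rplus_le_compat; [apply Rmult_le_compat_l | apply Rmult_le_compat_r] | ]; lra.
Qed.

Lemma F2_le_sub p q : 0 <= p <= 1 -> 0 <= q <= 1 -> b * p * q <= M - F2 p q.
Proof.
  intros. unfold F2. assert (0 <= (1 - q) * (M - q)) by (apply Rmult_le_pos; lra). nra.
Qed.

End Reaction2.

Definition nemytskii (F : R -> R -> R) (p q : R -> R) y := F (p y) (q y).

Definition box_valued (L : R) (p q : R -> R) :=
  forall x, 0 <= x <= L -> 0 <= p x <= 1 /\ 0 <= q x <= 1.

Lemma lipschitz_on_nemytskii L K F C p q : 0 <= C -> box_lipschitz F C ->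
  box_valued L p q -> lipschitz_on L K p -> lipschitz_on L K q ->
  lipschitz_on L (2 * C * K) (nemytskii F p q).
Proof.
  intros HC HF Hbox Hp Hq x y Hx Hy. unfold nemytskii.
  destruct (Hbox x Hx), (Hbox y Hy).
  eapply Rle_trans; [apply HF; auto |].
  pose proof (Hp x y Hx Hy). pose proof (Hq x y Hx Hy).
  replace (2 * C * K * Rabs (x - y)) with (C * (K * Rabs (x - y) + K * Rabs (x - y))) by ring.
  apply Rmult_le_compat_l; lra.
Qed.

Lemma unif_cvg_on_nemytskii L F C (p q : nat -> R -> R) pl ql : 0 <= C -> box_lipschitz F C ->
  (forall n, box_valued L (p n) (q n)) -> box_valued L pl ql ->
  unif_cvg_on L p pl -> unif_cvg_on L q ql ->
  unif_cvg_on L (fun n => nemytskii F (p n) (q n)) (nemytskii F pl ql).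
Proof.
  intros HC HF Hbox Hbox0 Hp Hq e He.
  destruct (Hp (e / (2 * (C + 1)))) as [N1 HN1]; [apply Rdiv_lt_0_compat; lra |].
  destruct (Hq (e / (2 * (C + 1)))) as [N2 HN2]; [apply Rdiv_lt_0_compat; lra |].
  exists (Nat.max N1 N2). intros n Hn x Hx. unfold nemytskii.
  destruct (Hbox n x Hx), (Hbox0 x Hx).
  eapply Rle_trans; [apply HF; auto |].
  pose proof (HN1 n ltac:(lia) x Hx). pose proof (HN2 n ltac:(lia) x Hx).
  apply Rle_trans with (C * (e / (2 * (C + 1)) + e / (2 * (C + 1)))).
  - apply Rmult_le_compat_l; lra.
  - replace (C * (e / (2 * (C + 1)) + e / (2 * (C + 1)))) with (e * (C / (C + 1))) by (field; lra).
    assert (C / (C + 1) <= 1).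
    { apply (Rmult_le_reg_r (C + 1)); [lra |]. unfold Rdiv. rewrite Rmult_assoc, Rinv_l; lra. }
    nra.
Qed.



(** * Monotone iteration *)

Section Competition.

Variables b L abar : R.
Hypothesis Hb : 1 < b.
Hypothesis HL : PI < L.
Hypothesis Habar : 0 < abar.
Hypothesis Habar_lt : abar < 1 - PI ^ 2 / L ^ 2.

(* Any [m] with [m ^ 2 >= b + 2] would do: this makes [h1] and [h2] monotone. *)
Definition m := b + 2.
Definition M := m ^ 2.
Definition h1 := F1 abar M.
Definition h2 := F2 b M.

Lemma L_pos : 0 < L.
Proof. pose proof PI_RGT_0. lra. Qed.

Lemma m_pos : 0 < m.
Proof. unfold m. lra. Qed.

Lemma M_ge : b + 2 <= M.
Proof. unfold M, m. nra. Qed.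

Lemma abar_le_1 : abar <= 1.
Proof.
  pose proof L_pos.
  assert (0 <= PI ^ 2 / L ^ 2) by (apply Rmult_le_pos; [nra | left; apply Rinv_0_lt_compat; nra]).
  lra.
Qed.

Lemma h1_range p q : 0 <= p <= 1 -> 0 <= q <= 1 -> 0 <= h1 p q <= M.
Proof. pose proof abar_le_1. pose proof M_ge. apply F1_range; lra. Qed.

Lemma h2_range p q : 0 <= p <= 1 -> 0 <= q <= 1 -> 0 <= h2 p q <= M.
Proof. pose proof abar_le_1. pose proof M_ge. apply F2_range; lra. Qed.

Lemma h1_lipschitz : box_lipschitz h1 (M + 1).
Proof. pose proof abar_le_1. pose proof M_ge. apply F1_lipschitz; lra. Qed.

Lemma h2_lipschitz : box_lipschitz h2 (M + 1).
Proof. pose proof abar_le_1. pose proof M_ge. apply F2_lipschitz; lra. Qed.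

(* A multiple of the principal Dirichlet eigenfunction of [(0, L)]; [0 < amp] is exactly
   the hypothesis on [abar]. *)
Definition omega := PI / L.
Definition amp := 1 - abar - omega ^ 2.
Definition subsol x := amp * sin (omega * x).
Definition subsol1 x := amp * omega * cos (omega * x).

Lemma amp_pos : 0 < amp.
Proof.
  unfold amp, omega. pose proof L_pos.
  replace ((PI / L) ^ 2) with (PI ^ 2 / L ^ 2) by (field; lra). lra.
Qed.

Lemma subsol_C2 : classical_C2 L subsol subsol1 (fun x => - omega ^ 2 * subsol x).
Proof.
  assert (D1 : forall x, is_derive subsol x (subsol1 x))
    by (intros x; unfold subsol, subsol1; auto_derive; [easy | ring]).
  assert (D2 : forall x, is_derive subsol1 x (- omega ^ 2 * subsol x))
    by (intros x; unfold subsol, subsol1; auto_derive; [easy | ring]).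
  split.
  - intros x _. eapply is_derive_continuous, D1.
  - intros x _. split; [| split]; [apply D1 | apply D2 |].
    apply (continuous_scal_r (- omega ^ 2) subsol). eapply is_derive_continuous, D1.
Qed.

Lemma omega_L : omega * L = PI.
Proof. unfold omega. pose proof L_pos. field. lra. Qed.

Lemma subsol_range x : 0 <= x <= L -> 0 <= subsol x <= amp.
Proof.
  intros Hx. unfold subsol. pose proof amp_pos. pose proof (SIN_bound (omega * x)).
  assert (0 < omega) by (unfold omega; apply Rdiv_lt_0_compat; [apply PI_RGT_0 | apply L_pos]).
  assert (0 <= sin (omega * x)) by (apply sin_ge_0; [| rewrite <- omega_L]; nra).
  split; nra.
Qed.

Lemma subsol_pos x : 0 < x < L -> 0 < subsol x.
Proof.
  intros Hx. unfold subsol. pose proof amp_pos.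
  assert (0 < omega) by (unfold omega; apply Rdiv_lt_0_compat; [apply PI_RGT_0 | apply L_pos]).
  assert (0 < sin (omega * x)) by (apply sin_gt_0; [| rewrite <- omega_L]; nra).
  nra.
Qed.

Lemma subsol_0 : subsol 0 = 0.
Proof. unfold subsol. rewrite Rmult_0_r, sin_0. ring. Qed.

Lemma subsol_L : subsol L = 0.
Proof. unfold subsol. rewrite omega_L, sin_PI. ring. Qed.

Definition step (pq : (R -> R) * (R -> R)) : (R -> R) * (R -> R) :=
  (green m L (nemytskii h1 (fst pq) (snd pq)),
   fun x => green m L (nemytskii h2 (fst pq) (snd pq)) x + homog_one m L x).

Definition iterate n := Nat.iter n step (fun _ => 1, fun _ => 0).
Definition P n := fst (iterate n).
Definition Q n := snd (iterate n).

Definition lip_const := (2 * L * M + m) * exp (m * L).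

Definition admissible (p q : R -> R) :=
  (forall x, 0 <= x <= L -> subsol x <= p x <= 1 /\ 0 <= q x <= 1) /\
  lipschitz_on L lip_const p /\ lipschitz_on L lip_const q.

Lemma lip_const_nonneg : 0 <= lip_const.
Proof.
  unfold lip_const. pose proof L_pos. pose proof m_pos. pose proof M_ge.
  pose proof (exp_pos (m * L)).
  apply Rmult_le_pos; nra.
Qed.

Lemma admissible_box_valued p q : admissible p q -> box_valued L p q.
Proof. intros [Hr _] x Hx. destruct (Hr x Hx). pose proof (subsol_range x Hx). split; lra. Qed.

Lemma admissible_source F p q : box_lipschitz F (M + 1) -> admissible p q ->
  clamped_continuous L (nemytskii F p q).
Proof.
  intros HF Hpq. pose proof M_ge. pose proof lip_const_nonneg. pose proof L_pos.
  apply (lipschitz_on_clamped_continuous L (2 * (M + 1) * lip_const)); [lra | nra |].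
  pose proof (admissible_box_valued p q Hpq) as Hbox. destruct Hpq as (_ & Hp & Hq).
  apply lipschitz_on_nemytskii; auto. lra.
Qed.

Lemma green_M x : 0 <= x <= L -> green m L (fun _ => M) x = 1 - homog_one m L x.
Proof. apply green_const; [apply m_pos | apply L_pos]. Qed.

Lemma source_range p q : box_valued L p q -> forall y, 0 <= y <= L ->
  0 <= nemytskii h1 p q y <= M /\ 0 <= nemytskii h2 p q y <= M.
Proof.
  intros Hpq y Hy. destruct (Hpq y Hy). split; [apply h1_range | apply h2_range]; auto.
Qed.

Lemma green_le_1_sub_homog_one g : clamped_continuous L g ->
  (forall y, 0 <= y <= L -> g y <= M) ->
  forall x, 0 <= x <= L -> green m L g x <= 1 - homog_one m L x.
Proof.
  pose proof m_pos. pose proof L_pos.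
  intros Hg Hle x Hx. rewrite <- green_M by exact Hx.
  apply green_le; auto. intros y; apply continuous_const.
Qed.

Lemma step_range p q : admissible p q -> forall x, 0 <= x <= L ->
  subsol x <= green m L (nemytskii h1 p q) x <= 1 /\
  0 <= green m L (nemytskii h2 p q) x + homog_one m L x <= 1.
Proof.
  intros Hpq x Hx. pose proof m_pos as Hm. pose proof L_pos as HL0.
  pose proof (homog_one_pos m L x).
  assert (Hg1 : clamped_continuous L (nemytskii h1 p q))
    by (apply admissible_source, Hpq; apply h1_lipschitz).
  assert (Hg2 : clamped_continuous L (nemytskii h2 p q))
    by (apply admissible_source, Hpq; apply h2_lipschitz).
  pose proof (source_range p q (admissible_box_valued p q Hpq)) as Hrange.
  repeat split.
  - apply (green_ge_subsolution m L Hm HL0 _ subsol subsol1 _ Hg1 subsol_C2);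
      [| apply Req_le, subsol_0 | apply Req_le, subsol_L | exact Hx].
    intros y Hy. destruct Hpq as [Hr _]. destruct (Hr y ltac:(lra)).
    pose proof (subsol_range y ltac:(lra)). pose proof abar_le_1. pose proof M_ge.
    enough ((omega ^ 2 + M) * subsol y <= nemytskii h1 p q y) by (unfold M in *; lra).
    apply (F1_ge abar M); unfold amp in *; try lra; nra.
  - enough (green m L (nemytskii h1 p q) x <= 1 - homog_one m L x) by lra.
    apply green_le_1_sub_homog_one; auto. apply Hrange.
  - enough (0 <= green m L (nemytskii h2 p q) x) by lra.
    apply green_ge0; auto. apply Hrange.
  - enough (green m L (nemytskii h2 p q) x <= 1 - homog_one m L x) by lra.
    apply green_le_1_sub_homog_one; auto. apply Hrange.
Qed.

Lemma step_lipschitz p q : admissible p q ->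
  lipschitz_on L lip_const (green m L (nemytskii h1 p q)) /\
  lipschitz_on L lip_const (fun x => green m L (nemytskii h2 p q) x + homog_one m L x).
Proof.
  intros Hpq. pose proof m_pos as Hm. pose proof L_pos as HL0. pose proof M_ge.
  pose proof (exp_pos (m * L)).
  assert (Hg1 : clamped_continuous L (nemytskii h1 p q))
    by (apply admissible_source, Hpq; apply h1_lipschitz).
  assert (Hg2 : clamped_continuous L (nemytskii h2 p q))
    by (apply admissible_source, Hpq; apply h2_lipschitz).
  assert (Habs : forall y, 0 <= y <= L ->
            Rabs (nemytskii h1 p q y) <= M /\ Rabs (nemytskii h2 p q y) <= M).
  { intros y Hy. destruct (source_range p q (admissible_box_valued p q Hpq) y Hy).
    rewrite !Rabs_pos_eq; lra. }
  split.
  - apply (lipschitz_on_of_derive _ _ _ (green1 m L (nemytskii h1 p q)));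
      [intros; now apply is_derive_green |].
    intros t Ht.
    pose proof (Rabs_green1_le _ _ Hm HL0 _ M Hg1 (fun y Hy => proj1 (Habs y Hy)) t Ht).
    unfold lip_const. nra.
  - apply (lipschitz_on_of_derive _ _ _
             (fun t => green1 m L (nemytskii h2 p q) t + homog_one1 m L t)).
    + intros t Ht. apply (is_derive_plus (V := R_NormedModule)); [now apply is_derive_green |].
      apply is_derive_homog_one.
    + intros t Ht. eapply Rle_trans; [apply Rabs_triang |].
      pose proof (Rabs_green1_le _ _ Hm HL0 _ M Hg2 (fun y Hy => proj2 (Habs y Hy)) t Ht).
      pose proof (Rabs_homog_one1_le _ _ Hm HL0 t Ht).
      unfold lip_const. lra.
Qed.

Lemma step_admissible p q : admissible p q -> admissible (fst (step (p, q))) (snd (step (p, q))).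
Proof.
  intros Hpq. split; [apply step_range, Hpq | apply step_lipschitz, Hpq].
Qed.

Lemma admissible_iterate n : admissible (P n) (Q n).
Proof.
  induction n as [| n IH].
  - pose proof lip_const_nonneg. split; [| split].
    + intros x Hx. pose proof (subsol_range x Hx). pose proof amp_pos.
      assert (amp <= 1) by (unfold amp; pose proof (pow2_ge_0 omega); lra).
      unfold P, Q; simpl. lra.
    + intros x y _ _. unfold P; simpl. rewrite Rminus_diag, Rabs_R0.
      pose proof (Rabs_pos (x - y)). nra.
    + intros x y _ _. unfold Q; simpl. rewrite Rminus_diag, Rabs_R0.
      pose proof (Rabs_pos (x - y)). nra.
  - exact (step_admissible _ _ IH).
Qed.

Lemma P_S n : P (S n) = green m L (nemytskii h1 (P n) (Q n)).
Proof. reflexivity. Qed.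

Lemma Q_S n x : Q (S n) x = green m L (nemytskii h2 (P n) (Q n)) x + homog_one m L x.
Proof. reflexivity. Qed.

Lemma box_valued_iterate n : box_valued L (P n) (Q n).
Proof. apply admissible_box_valued, admissible_iterate. Qed.

Lemma clamped_continuous_iterate F n : box_lipschitz F (M + 1) ->
  clamped_continuous L (nemytskii F (P n) (Q n)).
Proof. intros HF. apply admissible_source; [exact HF | apply admissible_iterate]. Qed.

Lemma iterate_monotone n x : 0 <= x <= L -> P (S n) x <= P n x /\ Q n x <= Q (S n) x.
Proof.
  pose proof m_pos as Hm. pose proof L_pos as HL0. pose proof abar_le_1. pose proof M_ge.
  revert x. induction n as [| n IH]; intros x Hx.
  - destruct (box_valued_iterate 1 x Hx). unfold P, Q in *; simpl in *. lra.
  - rewrite (P_S n), (P_S (S n)), !Q_S. split.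
    + apply green_le; auto; try (apply clamped_continuous_iterate, h1_lipschitz).
      intros y Hy. destruct (IH y Hy), (box_valued_iterate n y Hy), (box_valued_iterate (S n) y Hy).
      apply F1_le; lra.
    + apply Rplus_le_compat_r, green_le; auto; try (apply clamped_continuous_iterate, h2_lipschitz).
      intros y Hy. destruct (IH y Hy), (box_valued_iterate n y Hy), (box_valued_iterate (S n) y Hy).
      apply F2_le; lra.
Qed.

Definition Plim x := real (Lim_seq (fun n => P n x)).
Definition Qlim x := real (Lim_seq (fun n => Q n x)).

Lemma is_lim_seq_P x : 0 <= x <= L -> is_lim_seq (fun n => P n x) (Plim x).
Proof.
  intros Hx. apply Lim_seq_correct', (ex_finite_lim_seq_decr _ 0).
  - intros n. apply (iterate_monotone n x Hx).
  - intros n. apply (box_valued_iterate n x Hx).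
Qed.

Lemma is_lim_seq_Q x : 0 <= x <= L -> is_lim_seq (fun n => Q n x) (Qlim x).
Proof.
  intros Hx. apply Lim_seq_correct', (ex_finite_lim_seq_incr _ 1).
  - intros n. apply (iterate_monotone n x Hx).
  - intros n. apply (box_valued_iterate n x Hx).
Qed.

Lemma admissible_lim : admissible Plim Qlim.
Proof.
  split; [| split].
  - intros x Hx.
    assert (Hr : forall n, subsol x <= P n x <= 1 /\ 0 <= Q n x <= 1)
      by (intros n; destruct (admissible_iterate n) as [Hr _]; exact (Hr x Hx)).
    split.
    + apply (is_lim_seq_between (fun n => P n x)); [apply Hr | apply is_lim_seq_P, Hx].
    + apply (is_lim_seq_between (fun n => Q n x)); [apply Hr | apply is_lim_seq_Q, Hx].
  - apply (lipschitz_on_lim _ _ P); [apply is_lim_seq_P | intros n; apply admissible_iterate].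
  - apply (lipschitz_on_lim _ _ Q); [apply is_lim_seq_Q | intros n; apply admissible_iterate].
Qed.

Lemma is_lim_seq_green_iterate F : box_lipschitz F (M + 1) ->
  forall x, 0 <= x <= L ->
  is_lim_seq (fun n => green m L (nemytskii F (P n) (Q n)) x) (green m L (nemytskii F Plim Qlim) x).
Proof.
  intros HF. pose proof M_ge. pose proof L_pos. pose proof lip_const_nonneg.
  destruct admissible_lim as (_ & HPl & HQl).
  apply is_lim_seq_green; [apply m_pos | exact L_pos | |
                           apply admissible_source; auto; apply admissible_lim |].
  - intros n. now apply clamped_continuous_iterate.
  - apply (unif_cvg_on_nemytskii _ _ (M + 1)); auto; [lra | apply box_valued_iterate | | |].
    + apply admissible_box_valued, admissible_lim.
    + apply (unif_cvg_on_of_lipschitz _ lip_const); auto;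
        [apply is_lim_seq_P | intros n; apply admissible_iterate].
    + apply (unif_cvg_on_of_lipschitz _ lip_const); auto;
        [apply is_lim_seq_Q | intros n; apply admissible_iterate].
Qed.

Lemma Plim_fixed x : 0 <= x <= L -> Plim x = green m L (nemytskii h1 Plim Qlim) x.
Proof.
  intros Hx. apply (is_lim_seq_eq (fun n => P (S n) x)).
  - apply (is_lim_seq_incr_1 (fun n => P n x)), is_lim_seq_P, Hx.
  - apply is_lim_seq_green_iterate; [apply h1_lipschitz | exact Hx].
Qed.

Lemma Qlim_fixed x : 0 <= x <= L -> Qlim x = green m L (nemytskii h2 Plim Qlim) x + homog_one m L x.
Proof.
  intros Hx. apply (is_lim_seq_eq (fun n => Q (S n) x)).
  - apply (is_lim_seq_incr_1 (fun n => Q n x)), is_lim_seq_Q, Hx.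
  - apply is_lim_seq_plus'; [| apply is_lim_seq_const].
    apply is_lim_seq_green_iterate; [apply h2_lipschitz | exact Hx].
Qed.

Definition phi := green m L (nemytskii h1 Plim Qlim).
Definition psi x := green m L (nemytskii h2 Plim Qlim) x + homog_one m L x.

Lemma clamped_continuous_lim F : box_lipschitz F (M + 1) ->
  clamped_continuous L (nemytskii F Plim Qlim).
Proof. intros HF. apply admissible_source; [exact HF | apply admissible_lim]. Qed.

Lemma phi_C2 : classical_C2 L phi (green1 m L (nemytskii h1 Plim Qlim))
  (fun x => m ^ 2 * phi x - nemytskii h1 Plim Qlim (clamp L x)).
Proof.
  apply green_C2; [apply m_pos | apply L_pos | apply clamped_continuous_lim, h1_lipschitz].
Qed.

Lemma psi_C2 : classical_C2 L psi
  (fun x => green1 m L (nemytskii h2 Plim Qlim) x + homog_one1 m L x)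
  (fun x => m ^ 2 * green m L (nemytskii h2 Plim Qlim) x - nemytskii h2 Plim Qlim (clamp L x)
            + m ^ 2 * homog_one m L x).
Proof.
  pose proof m_pos. pose proof L_pos.
  apply classical_C2_plus; [| now apply homog_one_C2].
  apply green_C2; auto. apply clamped_continuous_lim, h2_lipschitz.
Qed.

Lemma phi_psi_system x : 0 < x < L ->
  - (m ^ 2 * phi x - nemytskii h1 Plim Qlim (clamp L x)) = phi x * (1 - phi x - abar * psi x) /\
  - (m ^ 2 * green m L (nemytskii h2 Plim Qlim) x - nemytskii h2 Plim Qlim (clamp L x)
     + m ^ 2 * homog_one m L x) = psi x * (1 - b * phi x - psi x).
Proof.
  intros Hx. rewrite clamp_id by lra.
  assert (EP : Plim x = phi x) by (apply Plim_fixed; lra).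
  assert (EQ : Qlim x = psi x) by (apply Qlim_fixed; lra).
  replace (green m L (nemytskii h2 Plim Qlim) x) with (psi x - homog_one m L x)
    by (unfold psi; ring).
  unfold nemytskii. rewrite EP, EQ. unfold h1, h2, F1, F2, M. split; ring.
Qed.

Lemma phi_boundary : phi 0 = 0 /\ phi L = 0.
Proof. pose proof m_pos. pose proof L_pos. split; [apply green_0 | apply green_L]; auto. Qed.

Lemma psi_boundary : psi 0 = 1 /\ psi L = 1.
Proof.
  pose proof m_pos. pose proof L_pos. unfold psi.
  rewrite green_0, green_L, homog_one_0, homog_one_L by auto. split; ring.
Qed.

Lemma source_range_lim : forall y, 0 <= y <= L ->
  0 <= nemytskii h1 Plim Qlim y <= M /\ 0 <= nemytskii h2 Plim Qlim y <= M.
Proof. apply source_range, admissible_box_valued, admissible_lim. Qed.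

Lemma phi_psi_lower x : 0 <= x <= L -> subsol x <= phi x /\ / cosh (m * L / 2) <= psi x.
Proof.
  intros Hx. pose proof m_pos. pose proof L_pos. split.
  - unfold phi. rewrite <- Plim_fixed by exact Hx.
    destruct admissible_lim as [Hr _]. apply (Hr x Hx).
  - unfold psi. pose proof (homog_one_ge m L x).
    enough (0 <= green m L (nemytskii h2 Plim Qlim) x) by lra.
    apply green_ge0; auto; [apply clamped_continuous_lim, h2_lipschitz |].
    intros y Hy. apply source_range_lim, Hy.
Qed.

Lemma phi_lt_1 x : 0 <= x <= L -> phi x < 1.
Proof.
  intros Hx. pose proof (homog_one_pos m L x).
  enough (phi x <= 1 - homog_one m L x) by lra.
  apply green_le_1_sub_homog_one; [apply clamped_continuous_lim, h1_lipschitz | | exact Hx].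
  intros y Hy. apply source_range_lim, Hy.
Qed.

(* [1 - psi] solves the equation with source [M - F2(phi, psi) >= b phi psi], which is
   bounded below by a multiple of [subsol], hence so is [1 - psi]. *)
Lemma psi_le x : 0 <= x <= L -> psi x <= 1 - b / cosh (m * L / 2) / (omega ^ 2 + M) * subsol x.
Proof.
  intros Hx. pose proof m_pos as Hm. pose proof L_pos as HL0. pose proof M_ge.
  pose proof (cosh_ge_1 (m * L / 2)). pose proof (pow2_ge_0 omega).
  set (c := b / cosh (m * L / 2) / (omega ^ 2 + M)).
  set (G2 := green m L (nemytskii h2 Plim Qlim)).
  assert (Hh2 : clamped_continuous L (nemytskii h2 Plim Qlim))
    by apply clamped_continuous_lim, h2_lipschitz.
  enough (c * subsol x + G2 x <= green m L (fun _ => M) x)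
    by (rewrite green_M in * by exact Hx; unfold psi; fold G2; lra).
  assert (HMc : clamped_continuous L (fun _ => M)) by (intros y; apply continuous_const).
  apply (green_ge_subsolution m L Hm HL0 _ _ _ _ HMc
           (classical_C2_plus _ _ _ _ _ _ _ (classical_C2_scal _ c _ _ _ subsol_C2)
              (green_C2 m L Hm HL0 _ Hh2)));
    [| unfold G2; rewrite subsol_0, green_0 by auto; lra
     | unfold G2; rewrite subsol_L, green_L by auto; lra | exact Hx].
  intros y Hy. rewrite clamp_id by lra. unfold nemytskii.
  destruct admissible_lim as [Hr _]. destruct (Hr y ltac:(lra)).
  destruct (phi_psi_lower y ltac:(lra)) as [Hsub Hbeta].
  assert (EP : phi y = Plim y) by (symmetry; apply Plim_fixed; lra).
  assert (EQ : psi y = Qlim y) by (symmetry; apply Qlim_fixed; lra).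
  rewrite EP in Hsub. rewrite EQ in Hbeta.
  pose proof (subsol_range y ltac:(lra)).
  pose proof (F2_le_sub b M ltac:(lra) ltac:(lra) (Plim y) (Qlim y) ltac:(lra) ltac:(lra)).
  assert (Hc : c * (omega ^ 2 + M) = b * / cosh (m * L / 2)) by (unfold c; field; lra).
  assert (0 < / cosh (m * L / 2)) by (apply Rinv_0_lt_compat; lra).
  assert (b * / cosh (m * L / 2) * subsol y <= b * Plim y * Qlim y).
  { rewrite !Rmult_assoc. apply Rmult_le_compat_l; [lra |].
    rewrite Rmult_comm. apply Rmult_le_compat; lra. }
  change (h2 (Plim y) (Qlim y)) with (F2 b M (Plim y) (Qlim y)). fold M.
  match goal with |- ?lhs <= _ =>
    replace lhs with (c * (omega ^ 2 + M) * subsol y + F2 b M (Plim y) (Qlim y)) by ring end.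
  rewrite Hc. lra.
Qed.

Lemma phi_psi_bounds x : 0 < x < L -> (0 < phi x < 1) /\ (0 < psi x < 1).
Proof.
  intros Hx. pose proof (subsol_pos x Hx). pose proof (cosh_ge_1 (m * L / 2)).
  destruct (phi_psi_lower x ltac:(lra)). pose proof (phi_lt_1 x ltac:(lra)).
  pose proof (psi_le x ltac:(lra)).
  assert (0 < / cosh (m * L / 2)) by (apply Rinv_0_lt_compat; lra).
  assert (0 < b / cosh (m * L / 2) / (omega ^ 2 + M)).
  { pose proof M_ge. pose proof (pow2_ge_0 omega). unfold Rdiv.
    apply Rmult_lt_0_compat; [nra | apply Rinv_0_lt_compat; lra]. }
  split; split; nra.
Qed.

End Competition.

Theorem proposition4 (b L abar : R) :
  1 < b -> PI < L -> 0 < abar -> abar < 1 - PI ^ 2 / L ^ 2 ->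
  exists (phi phi1 phi2 psi psi1 psi2 : R -> R),
    classical_C2 L phi phi1 phi2 /\ classical_C2 L psi psi1 psi2 /\
    (forall x, 0 < x < L ->
       - phi2 x = phi x * (1 - phi x - abar * psi x) /\
       - psi2 x = psi x * (1 - b * phi x - psi x)) /\
    phi 0 = 0 /\ phi L = 0 /\ psi 0 = 1 /\ psi L = 1 /\
    (forall x, 0 < x < L -> 0 < phi x < 1 /\ 0 < psi x < 1).
Proof.
  intros Hb HL Habar Habar_lt.
  exists (phi b L abar). do 2 eexists. exists (psi b L abar). do 2 eexists.
  split; [| split; [| split; [| split; [| split; [| split; [| split]]]]]].
  - apply (phi_C2 b L abar); assumption.
  - apply (psi_C2 b L abar); assumption.
  - apply (phi_psi_system b L abar); assumption.
  - apply (phi_boundary b L abar); assumption.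
  - apply (phi_boundary b L abar); assumption.
  - apply (psi_boundary b L abar); assumption.
  - apply (psi_boundary b L abar); assumption.
  - apply (phi_psi_bounds b L abar); assumption.
Qed.
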